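(* Let $\mathsf{NL}+\{\mathrm{D}\}$ be $\mathsf{NL}$ extended by the axiom scheme (D) $\varphi\Rightarrow\varphi\oplus\psi$, where $\varphi\oplus\psi:=(\varphi^{*}\otimes\psi^{*})^{*}$. Then $\mathsf{NL}+\{\mathrm{D}\}$ is trivial, i.e. every formula is a theorem of it.
   Context: Formulas are built from a countably infinite set of variables using binary $\otimes,\circ$ and unary ${}^{*}$. Abbreviations: $\varphi\Rightarrow\psi:=(\varphi\circ\psi^{*})^{*}$; $\varphi\Leftrightarrow\psi:=(\varphi\Rightarrow\psi)\otimes(\psi\Rightarrow\varphi)$; $\varphi\not\Leftrightarrow\psi:=(\varphi\Leftrightarrow\psi)^{*}$; $\varphi\not\Leftrightarrow\psi\not\Leftrightarrow\chi:=((\varphi\not\Leftrightarrow\psi)\otimes(\varphi\not\Leftrightarrow\chi))\otimes(\psi\not\Leftrightarrow\chi)$. Axiom schemes: (A1) $\varphi\Rightarrow\varphi$; (A2) $(\varphi\circ\psi)\Rightarrow(\psi\circ\varphi)$; (A3) $\varphi\Rightarrow\varphi^{**}$; (A4) $(\varphi\Rightarrow\psi)\Rightarrow(\varphi\circ\psi)$; (A5) $(\varphi\otimes\psi)\Leftrightarrow(\psi\otimes\varphi)$; (A6) $((\varphi\otimes\psi)\Rightarrow\chi)\Rightarrow((\varphi\otimes\chi^{*})\Rightarrow\psi^{*})$; (A7) $(\varphi\not\Leftrightarrow\psi\not\Leftrightarrow\chi)\Rightarrow((\varphi\Rightarrow\psi)\Rightarrow((\psi\Rightarrow\chi)\Rightarrow(\varphi\Rightarrow\chi)))$.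 Theorems of $\mathsf{NL}$: least set containing all instances of (A1)–(A7) and closed under rules applying only to theorems: from theorems $\varphi\Rightarrow\psi$, $\varphi$ infer $\psi$; from theorems $\varphi,\psi$ infer $\varphi\otimes\psi$; from theorems $\varphi\Leftrightarrow\psi$ and $\chi$ infer $\chi'$ ($\chi'$ from $\chi$ replacing one or more occurrences of $\varphi$ by $\psi$); from a theorem $\varphi\otimes\psi$ infer $\varphi$. Extending by an axiom scheme adds its instances to the initial set. *)

(* Formulas over a countably infinite set of variables (indexed by nat),
   binary connectives (x) = Tens and o = Circ, unary * = Star. *)
Inductive form : Type :=
| Var : nat -> form
| Tens : form -> form -> form
| Circ : form -> form -> form
| Star : form -> form.

Definition Imp (a b : form) : form := Star (Circ a (Star b)).
Definition Iff (a b : form) : form := Tens (Imp a b) (Imp b a).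
Definition NIff (a b : form) : form := Star (Iff a b).
Definition NIff3 (a b c : form) : form :=
  Tens (Tens (NIff a b) (NIff a c)) (NIff b c).
Definition Oplus (a b : form) : form := Star (Tens (Star a) (Star b)).

Inductive repl0 (p q : form) : form -> form -> Prop :=
| r0_refl : forall c, repl0 p q c c
| r0_here : repl0 p q p q
| r0_tens : forall a a' b b', repl0 p q a a' -> repl0 p q b b' ->
    repl0 p q (Tens a b) (Tens a' b')
| r0_circ : forall a a' b b', repl0 p q a a' -> repl0 p q b b' ->
    repl0 p q (Circ a b) (Circ a' b')
| r0_star : forall a a', repl0 p q a a' -> repl0 p q (Star a) (Star a').

Inductive repl1 (p q : form) : form -> form -> Prop :=
| r1_here : repl1 p q p q
| r1_tensl : forall a a' b b', repl1 p q a a' -> repl0 p q b b' ->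
    repl1 p q (Tens a b) (Tens a' b')
| r1_tensr : forall a a' b b', repl0 p q a a' -> repl1 p q b b' ->
    repl1 p q (Tens a b) (Tens a' b')
| r1_circl : forall a a' b b', repl1 p q a a' -> repl0 p q b b' ->
    repl1 p q (Circ a b) (Circ a' b')
| r1_circr : forall a a' b b', repl0 p q a a' -> repl1 p q b b' ->
    repl1 p q (Circ a b) (Circ a' b')
| r1_star : forall a a', repl1 p q a a' -> repl1 p q (Star a) (Star a').

Inductive NL_axiom : form -> Prop :=
| A1 : forall a, NL_axiom (Imp a a)
| A2 : forall a b, NL_axiom (Imp (Circ a b) (Circ b a))
| A3 : forall a, NL_axiom (Imp a (Star (Star a)))
| A4 : forall a b, NL_axiom (Imp (Imp a b) (Circ a b))
| A5 : forall a b, NL_axiom (Iff (Tens a b) (Tens b a))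
| A6 : forall a b c,
    NL_axiom (Imp (Imp (Tens a b) c) (Imp (Tens a (Star c)) (Star b)))
| A7 : forall a b c,
    NL_axiom (Imp (NIff3 a b c)
                  (Imp (Imp a b) (Imp (Imp b c) (Imp a c)))).

Inductive D_axiom : form -> Prop :=
| D : forall a b, D_axiom (Imp a (Oplus a b)).

Inductive thm (Ax : form -> Prop) : form -> Prop :=
| thm_NL : forall f, NL_axiom f -> thm Ax f
| thm_ax : forall f, Ax f -> thm Ax f
| thm_mp : forall a b, thm Ax (Imp a b) -> thm Ax a -> thm Ax b
| thm_adj : forall a b, thm Ax a -> thm Ax b -> thm Ax (Tens a b)
| thm_repl : forall a b c c', thm Ax (Iff a b) -> thm Ax c ->
    repl1 a b c c' -> thm Ax c'
| thm_simp : forall a b, thm Ax (Tens a b) -> thm Ax a.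

Definition NLD_thm : form -> Prop := thm D_axiom.


(* Instantiating (D) at p^* with ψ := p and at p with ψ := p^*, and
   commuting ∘ by (A2) and ⊗ by (A5), proves both θ := (p^* ⊕ p)^* ∘ p and
   θ^*.  From such an inconsistency, (D) at θ together with (A6) proves every
   φ^**; then (A3) and (A6) prove every φ^*.  Hence every θ ⇔ φ is a
   theorem, and substituting φ for θ in θ proves φ. *)

Definition paradox (p : form) : form := Circ (Star (Oplus (Star p) p)) p.

Section NLExtension.

Variable Ax : form -> Prop.

Local Notation TH := (thm Ax).

Lemma thm_circ_of_imp a b : TH (Imp a b) -> TH (Circ a b).
Proof. exact (thm_mp Ax _ _ (thm_NL Ax _ (A4 a b))). Qed.

Lemma thm_star_circC a b : TH (Star (Circ a b)) -> TH (Star (Circ b a)).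
Proof.
  intros Hab.
  assert (Hiff : TH (Iff (Circ a b) (Circ b a))).
  { apply thm_adj; apply thm_NL, A2. }
  apply (thm_repl Ax _ _ _ _ Hiff Hab).
  apply r1_star, r1_here.
Qed.

Lemma thm_repl_tensC a b c c' :
  TH c -> repl1 (Tens a b) (Tens b a) c c' -> TH c'.
Proof. apply thm_repl, thm_NL, A5. Qed.

Lemma thm_star_of_dstar t b :
  TH t -> (forall z, TH (Star (Star z))) -> TH (Star b).
Proof.
  intros Ht Hdstar.
  set (c := Star (Star (Tens t b))).
  assert (H6 : TH (Imp (Tens t (Star c)) (Star b))).
  { apply (thm_mp Ax (Imp (Tens t b) c)).
    - apply thm_NL, A6.
    - apply thm_NL, A3. }
  apply (thm_mp Ax _ _ H6), thm_adj; [exact Ht | apply Hdstar].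
Qed.

Lemma thm_all_of_star t f : TH t -> (forall b, TH (Star b)) -> TH f.
Proof.
  intros Ht Hstar.
  assert (Hiff : TH (Iff t f)) by (apply thm_adj; apply Hstar).
  exact (thm_repl Ax _ _ _ _ Hiff Ht (r1_here t f)).
Qed.

Hypothesis Ax_D : forall a b, Ax (Imp a (Oplus a b)).

Lemma thm_D a b : TH (Imp a (Oplus a b)).
Proof. apply thm_ax, Ax_D. Qed.

Lemma thm_dstar_of_inconsistent u z :
  TH u -> TH (Star u) -> TH (Star (Star z)).
Proof.
  intros Hu Hnu.
  set (c := Tens (Star u) (Star z)).
  assert (H6 : TH (Imp (Tens (Star u) (Star c)) (Star (Star z)))).
  { apply (thm_mp Ax (Imp c c)).
    - apply thm_NL, A6.
    - apply thm_NL, A1. }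
  apply (thm_mp Ax _ _ H6), thm_adj; [exact Hnu |].
  exact (thm_mp Ax _ _ (thm_D u z) Hu).
Qed.

Lemma thm_paradox p : TH (paradox p).
Proof. apply thm_circ_of_imp, thm_star_circC, thm_D. Qed.

Lemma thm_star_paradox p : TH (Star (paradox p)).
Proof.
  apply thm_star_circC.
  apply (thm_repl_tensC (Star p) (Star (Star p)) _ _ (thm_D p (Star p))).
  apply r1_star, r1_circr; [apply r0_refl |].
  apply r1_star, r1_star, r1_here.
Qed.

Theorem thm_trivial f : TH f.
Proof.
  set (t := paradox (Var 0)).
  apply (thm_all_of_star t); [apply thm_paradox |].
  intros b; apply (thm_star_of_dstar t); [apply thm_paradox |].
  intros z; apply (thm_dstar_of_inconsistent t);
    [apply thm_paradox | apply thm_star_paradox].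
Qed.

End NLExtension.

Theorem proposition5p10 : forall f : form, NLD_thm f.
Proof. exact (thm_trivial D_axiom D). Qed.
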